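(* Let $\mathcal A$ be a full adjunction implicative ordered combinatory algebra with underlying complete lattice $(A,\le)$, and let $\mathcal P_\bullet(A_\Pi)$ be computed in the associated abstract Krivine structure $\mathcal K_{\mathcal A\bullet}$ (where $\Pi=A$ and $s\perp\pi\iff s\le\pi$), ordered by $C\le C'\iff C\supseteq C'$. Define $\iota:A\to\mathcal P_\bullet(A_\Pi)$, $\iota(a)={\uparrow}a=\{x\in A:a\le x\}$, and $\rho:\mathcal P_\bullet(A_\Pi)\to A$, $\rho(C)=\inf C$. Then $\iota,\rho$ are monotone and form a Galois connection $\iota\dashv\rho$: for $a\in A$ and $C\in\mathcal P_\bullet(A_\Pi)$, $a\le\rho(C)\iff\iota(a)\supseteq C$. Moreover $\rho\circ\iota=\mathrm{id}_A$, and $\iota(\rho(C))\supseteq C$ for all $C\in\mathcal P_\bullet(A_\Pi)$.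
   Context: A full adjunction implicative ordered combinatory algebra is an inf-complete poset $(A,\le)$ with application $ab$ monotone in both arguments, implication $a\to b$ antimonotone in the first and monotone in the second argument, elements $\mathsf k,\mathsf s$ with $\mathsf k ab\le a$, $\mathsf s abc\le ac(bc)$, such that $a\le b\to c\iff ab\le c$, and a subset $\Phi\subseteq A$ closed under application containing $\mathsf s,\mathsf k$. In $\mathcal K_{\mathcal A\bullet}$, $\Lambda=\Pi=A$ and $t\perp\pi$ iff $t\le\pi$. Polars: $L^\perp=\{\pi:\forall t\in L,\ t\le\pi\}$, ${}^\perp P=\{t:\forall\pi\in P,\ t\le\pi\}$; $\overline P=({}^\perp P)^\perp$; $\widehat P=\bigcup_{\pi\in P}\overline{\{\pi\}}$; $\mathcal P_\bullet(A_\Pi)=\{P\subseteq A:\widehat P=P\}$. *)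

Set Implicit Arguments.

Record FAIOCA := {
  car :> Type;
  le : car -> car -> Prop;
  le_refl : forall a, le a a;
  le_trans : forall a b c, le a b -> le b c -> le a c;
  le_antisym : forall a b, le a b -> le b a -> a = b;
  inf : (car -> Prop) -> car;
  inf_lb : forall (X : car -> Prop) x, X x -> le (inf X) x;
  inf_glb : forall (X : car -> Prop) a, (forall x, X x -> le a x) -> le a (inf X);
  app : car -> car -> car;
  app_mono : forall a a' b b', le a a' -> le b b' -> le (app a b) (app a' b');
  imp : car -> car -> car;
  imp_mono : forall a a' b b', le a' a -> le b b' -> le (imp a b) (imp a' b');
  kk : car;
  ss : car;
  kk_ax : forall a b, le (app (app kk a) b) a;
  ss_ax : forall a b c, le (app (app (app ss a) b) c) (app (app a c) (app b c));
  adj : forall a b c, le a (imp b c) <-> le (app a b) c;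
  Phi : car -> Prop;
  Phi_app : forall a b, Phi a -> Phi b -> Phi (app a b);
  Phi_s : Phi ss;
  Phi_k : Phi kk
}.

Section AKS.
Context {A : FAIOCA}.

(* Abstract Krivine structure K_{A.}: Lambda = Pi = A, t _|_ pi iff t <= pi. *)
Definition orth (t p : A) : Prop := le A t p.

Definition polarL (L : A -> Prop) : A -> Prop :=
  fun p => forall t, L t -> orth t p.
Definition polarP (P : A -> Prop) : A -> Prop :=
  fun t => forall p, P p -> orth t p.
Definition closure (P : A -> Prop) : A -> Prop := polarL (polarP P).
Definition hat (P : A -> Prop) : A -> Prop :=
  fun x => exists p, P p /\ closure (fun y => y = p) x.

Definition in_Pbullet (P : A -> Prop) : Prop := forall x, hat P x <-> P x.

Definition subset (P Q : A -> Prop) : Prop := forall x, P x -> Q x.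

Definition iota (a : A) : A -> Prop := fun x => le A a x.
Definition rho (C : A -> Prop) : A := inf A C.
End AKS.


(* Since orthogonality is the order itself, the biorthogonal closure of a
   singleton {p} is the up-set of p, so [hat P] is the up-closure of P and
   every up-set [iota a] is a fixed point.  The Galois connection is then the
   universal property of the infimum: a <= inf C iff a lies below all of C,
   i.e. iff C is contained in the up-set of a.  None of this uses that C is
   itself in P_.(A_Pi). *)

Section UpSetsAndInfima.
Variable A : FAIOCA.

Lemma closure_singleton (p x : A) :
  closure (fun y => y = p) x <-> le A p x.
Proof.
  unfold closure, polarL, polarP, orth; split.
  - intros H. apply H. intros q ->. apply le_refl.
  - intros Hpx t Ht. apply le_trans with p; [apply Ht; reflexivity | exact Hpx].
Qed.

Lemma iota_in_Pbullet (a : A) : in_Pbullet (iota a).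
Proof.
  intros x; unfold hat, iota; split.
  - intros [p [Hap Hcl]]. apply closure_singleton in Hcl.
    apply le_trans with p; assumption.
  - intros Hax. exists x. split; [exact Hax | apply closure_singleton, le_refl].
Qed.

Lemma iota_antitone (a b : A) : le A a b -> subset (iota b) (iota a).
Proof.
  intros Hab x Hbx. unfold iota in *. apply le_trans with b; assumption.
Qed.

Lemma le_rho_iff (a : A) (C : A -> Prop) :
  le A a (rho C) <-> subset C (iota a).
Proof.
  unfold rho, subset, iota; split.
  - intros Ha x Hx. apply le_trans with (inf A C); [exact Ha | apply inf_lb, Hx].
  - apply inf_glb.
Qed.

Lemma subset_iota_rho (C : A -> Prop) : subset C (iota (rho C)).
Proof. apply le_rho_iff, le_refl. Qed.

Lemma rho_antitone (C C' : A -> Prop) : subset C' C -> le A (rho C) (rho C').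
Proof.
  intros HC'C. apply le_rho_iff.
  intros x Hx. apply subset_iota_rho, HC'C, Hx.
Qed.

Lemma rho_iota (a : A) : rho (iota a) = a.
Proof.
  apply le_antisym.
  - apply inf_lb, le_refl.
  - apply le_rho_iff. intros x Hx. exact Hx.
Qed.

End UpSetsAndInfima.

Theorem mainTheorem13 (A : FAIOCA) :
  (* iota lands in P_.(A_Pi) *)
  (forall a : A, in_Pbullet (iota a)) /\
  (* iota monotone (order on P_. is reverse inclusion) *)
  (forall a b : A, le A a b -> subset (iota b) (iota a)) /\
  (* rho monotone *)
  (forall C C' : A -> Prop, in_Pbullet C -> in_Pbullet C' ->
      subset C' C -> le A (rho C) (rho C')) /\
  (* Galois connection iota -| rho *)
  (forall (a : A) (C : A -> Prop), in_Pbullet C ->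
      (le A a (rho C) <-> subset C (iota a))) /\
  (* rho o iota = id *)
  (forall a : A, rho (iota a) = a) /\
  (* iota (rho C) contains C *)
  (forall C : A -> Prop, in_Pbullet C -> subset C (iota (rho C))).
Proof.
  split; [exact (iota_in_Pbullet A) |].
  split; [exact (iota_antitone A) |].
  split; [intros C C' _ _; apply rho_antitone |].
  split; [intros a C _; apply le_rho_iff |].
  split; [exact (rho_iota A) |].
  intros C _; apply subset_iota_rho.
Qed.
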